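(* Let $X$ be a finite-dimensional real normed space, $\mathcal M=\{M_1,\dots,M_n\}\subset\mathcal P^f_{\mathrm{Cl}}(X)$, $\Sigma(\mathcal M)\ne\emptyset$ and $d\in\Omega(\mathcal M)$. Then every $K\in\Sigma_d(\mathcal M)$ contains (as a subset) at least one element of $\Sigma_d(\mathcal M)$ that is minimal with respect to inclusion in $\Sigma_d(\mathcal M)$.
   Context: For a metric space $X$, $p\in X$, $A\subset X$: $|p\,A|=\inf_{a\in A}|p\,a|$ ($=\infty$ if $A=\emptyset$); for $0\le r<\infty$, $B_r(A)=\{p:|p\,A|\le r\}$. For nonempty $A,B$, $d_H(A,B)=\max\{\sup_{a\in A}|a\,B|,\sup_{b\in B}|b\,A|\}\in[0,\infty]$. $\mathcal P_{\mathrm{Cl}}(X)$ is the set of nonempty closed subsets of $X$ with $d_H$. A finiteness class of $\mathcal P_{\mathrm{Cl}}(X)$ is an equivalence class of the relation $A\sim B\iff d_H(A,B)<\infty$; $\mathcal P^f_{\mathrm{Cl}}(X)$ denotes a fixed finiteness class. For finite $\mathcal M=\{M_1,\dots,M_n\}\subset\mathcal P^f_{\mathrm{Cl}}(X)$, set $S_{\mathcal M}(Y)=\sum_{i=1}^n d_H(Y,M_i)$ for $Y\in\mathcal P^f_{\mathrm{Cl}}(X)$; $\Sigma(\mathcal M)$ is the set of all minimizers of $S_{\mathcal M}$ over $\mathcal P^f_{\mathrm{Cl}}(X)$. For $K\in\Sigma(\mathcal M)$, $d(K)=(d_H(K,M_1),\dots,d_H(K,M_n))$; $\Omega(\mathcal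 M)=\{d(K):K\in\Sigma(\mathcal M)\}$; for $d=(d_1,\dots,d_n)\in\Omega(\mathcal M)$, $\Sigma_d(\mathcal M)=\{K\in\Sigma(\mathcal M):d(K)=d\}$, partially ordered by inclusion. *)

From HB Require Import structures.
From mathcomp Require Import all_boot all_order all_algebra.
From mathcomp Require Import all_classical all_reals all_analysis.
Set Implicit Arguments. Unset Strict Implicit. Unset Printing Implicit Defensive.
Import Order.TTheory GRing.Theory Num.Theory.
Import numFieldNormedType.Exports.
Local Open Scope classical_set_scope.
Local Open Scope ring_scope.

Definition finite_dim (R : realType) (V : normedModType R) : Prop :=
  exists (m : nat) (e : 'I_m -> V),
    forall x : V, exists c : 'I_m -> R, x = \sum_(i < m) c i *: e i.

(* |p A| = inf_{a in A} |p a|, equal to +oo when A is empty *)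
Definition dist_pt (R : realType) (V : normedModType R) (p : V) (A : set V) : \bar R :=
  ereal_inf [set (`|p - a|)%:E | a in A].

Definition hausdorff (R : realType) (V : normedModType R) (A B : set V) : \bar R :=
  maxe (ereal_sup [set dist_pt a B | a in A]) (ereal_sup [set dist_pt b A | b in B]).

Definition fin_class (R : realType) (V : normedModType R) (A0 : set V) : set (set V) :=
  [set B | closed B /\ B !=set0 /\ (hausdorff B A0 < +oo)%E].

Definition S_M (R : realType) (V : normedModType R) (n : nat) (M : 'I_n -> set V)
  (Y : set V) : \bar R := (\sum_(i < n) hausdorff Y (M i))%E.

Definition Sigma (R : realType) (V : normedModType R) (A0 : set V) (n : nat)
  (M : 'I_n -> set V) : set (set V) :=
  [set K | fin_class A0 K /\ forall Y, fin_class A0 Y -> (S_M M K <= S_M M Y)%E].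

Definition dvec (R : realType) (V : normedModType R) (n : nat) (M : 'I_n -> set V)
  (K : set V) : 'I_n -> \bar R := fun i => hausdorff K (M i).

Definition Omega (R : realType) (V : normedModType R) (A0 : set V) (n : nat)
  (M : 'I_n -> set V) : set ('I_n -> \bar R) :=
  [set d | exists K, Sigma A0 M K /\ dvec M K = d].

Definition Sigma_d (R : realType) (V : normedModType R) (A0 : set V) (n : nat)
  (M : 'I_n -> set V) (d : 'I_n -> \bar R) : set (set V) :=
  [set K | Sigma A0 M K /\ dvec M K = d].

From HB Require Import structures.
From mathcomp Require Import all_boot all_order all_algebra.
From mathcomp Require Import all_classical all_reals all_analysis.
Import Order.TTheory GRing.Theory Num.Theory.
Import numFieldNormedType.Exports.
Local Open Scope classical_set_scope.
Local Open Scope ring_scope.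
Set Implicit Arguments. Unset Strict Implicit.

(* By Zorn's lemma it suffices that the intersection I of every nonempty
   chain in Sigma_d(M) lies again in Sigma_d(M).  For b in M_i every member
   of the chain meets the closed ball of radius d_i + e around b; these balls
   are compact in finite dimension, so the nested closed sets meet them in a
   common point.  Hence I is nonempty with d_H(I, M_i) <= d_i for all i, and
   minimality of S_M over the finiteness class turns these inequalities into
   equalities. *)

Section HausdorffDistance.
Variables (R : realType) (V : normedModType R).
Implicit Types (A B C : set V) (p a b : V).

Lemma dist_pt_le_norm p A a : A a -> (dist_pt p A <= (`|p - a|)%:E)%E.
Proof. by move=> Aa; apply: ereal_inf_lbound; exists a. Qed.

Lemma dist_pt_ge0 p A : (0 <= dist_pt p A)%E.
Proof. by apply: le_ereal_inf_tmp => _ [a _ <-]; rewrite lee_fin. Qed.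

Lemma dist_pt_leP p A (r : R) : (dist_pt p A <= r%:E)%E ->
  forall e, 0 < e -> exists a, A a /\ `|p - a| < r + e.
Proof.
move=> pAr e e0; have : (dist_pt p A < (r + e)%:E)%E.
  by apply: le_lt_trans pAr _; rewrite lte_fin ltrDl.
by move=> /ereal_inf_lt [_ [a Aa <-]]; rewrite lte_fin; exists a.
Qed.

Lemma dist_pt_le_approx p A (r : R) :
  (forall e, 0 < e -> exists a, A a /\ `|p - a| <= r + e) ->
  (dist_pt p A <= r%:E)%E.
Proof.
move=> near_r; apply/lee_addgt0Pr => e e0; have [a [Aa pa]] := near_r e e0.
by apply: le_trans (dist_pt_le_norm p Aa) _; rewrite -EFinD lee_fin.
Qed.

Lemma dist_pt_triangle a B C (r s : R) : (dist_pt a B <= r%:E)%E ->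
  (forall b, B b -> (dist_pt b C <= s%:E)%E) ->
  (dist_pt a C <= (r + s)%:E)%E.
Proof.
move=> aB BC; apply: dist_pt_le_approx => e e0.
have e20 : 0 < e / 2 by rewrite divr_gt0.
have [b [Bb ab]] := dist_pt_leP aB e20.
have [c [Cc bc]] := dist_pt_leP (BC b Bb) e20.
exists c; split => //.
have -> : a - c = (a - b) + (b - c) by rewrite addrA subrK.
apply: le_trans (ler_normD _ _) _.
have -> : r + s + e = (r + e / 2) + (s + e / 2) by rewrite addrACA -splitr.
exact/ltW/ltrD.
Qed.

Lemma hausdorff_le A B x : (forall a, A a -> (dist_pt a B <= x)%E) ->
  (forall b, B b -> (dist_pt b A <= x)%E) -> (hausdorff A B <= x)%E.
Proof.
move=> AB BA; rewrite /hausdorff ge_max; apply/andP; split;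
  apply: ge_ereal_sup => _ [y Ay <-]; by [apply: AB|apply: BA].
Qed.

Lemma dist_pt_le_hausdorffl A B a : A a -> (dist_pt a B <= hausdorff A B)%E.
Proof.
move=> Aa; rewrite /hausdorff le_max; apply/orP; left.
by apply: ereal_sup_ubound; exists a.
Qed.

Lemma dist_pt_le_hausdorffr A B b : B b -> (dist_pt b A <= hausdorff A B)%E.
Proof.
move=> Bb; rewrite /hausdorff le_max; apply/orP; right.
by apply: ereal_sup_ubound; exists b.
Qed.

Lemma hausdorffC A B : hausdorff A B = hausdorff B A.
Proof. by rewrite /hausdorff maxC. Qed.

Lemma hausdorff_ge0 A B : A !=set0 -> (0 <= hausdorff A B)%E.
Proof.
by move=> [a Aa]; apply: le_trans (dist_pt_le_hausdorffl B Aa); apply: dist_pt_ge0.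
Qed.

Lemma hausdorff_triangle A B C (r s : R) : (hausdorff A B <= r%:E)%E ->
  (hausdorff B C <= s%:E)%E -> (hausdorff A C <= (r + s)%:E)%E.
Proof.
move=> AB BC; apply: hausdorff_le => [a Aa|c Cc].
  apply: (@dist_pt_triangle a B C r s).
    exact: le_trans (dist_pt_le_hausdorffl B Aa) AB.
  by move=> b Bb; apply: le_trans (dist_pt_le_hausdorffl C Bb) BC.
rewrite addrC; apply: (@dist_pt_triangle c B A s r).
  exact: le_trans (dist_pt_le_hausdorffr B Cc) BC.
by move=> b Bb; apply: le_trans (dist_pt_le_hausdorffr A Bb) AB.
Qed.

Lemma hausdorff_fin_num A B : A !=set0 -> (hausdorff A B < +oo)%E ->
  hausdorff A B \is a fin_num.
Proof. by move=> A0 ABoo; rewrite ge0_fin_numE // hausdorff_ge0. Qed.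

Lemma hausdorff_lty_nonempty A B : A !=set0 -> (hausdorff A B < +oo)%E -> B !=set0.
Proof.
move=> [a Aa] ABoo; apply/set0P/eqP => B0; move: ABoo.
apply/negP; rewrite -leNgt; apply: le_trans (dist_pt_le_hausdorffl B Aa).
by rewrite /dist_pt B0 image_set0 ereal_inf0.
Qed.

Lemma hausdorff_lty_trans A B C : A !=set0 -> C !=set0 ->
  (hausdorff A B < +oo)%E -> (hausdorff B C < +oo)%E -> (hausdorff A C < +oo)%E.
Proof.
move=> A0 C0 ABoo BCoo.
have /fineK AB := hausdorff_fin_num A0 ABoo.
have /fineK BC : hausdorff B C \is a fin_num.
  by rewrite hausdorffC hausdorff_fin_num // hausdorffC.
apply: le_lt_trans (ltry (fine (hausdorff A B) + fine (hausdorff B C))).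
by apply: hausdorff_triangle; rewrite ?AB ?BC.
Qed.

End HausdorffDistance.

Section FiniteDimensional.
Variables (R : realType) (V : normedModType R).

Definition spanning m (e : 'I_m -> V) :=
  forall x : V, exists c : 'I_m -> R, x = \sum_(i < m) c i *: e i.

Definition free_family m (e : 'I_m -> V) :=
  forall c : 'I_m -> R, \sum_(i < m) c i *: e i = 0 -> forall j, c j = 0.

(* A nontrivial relation would let e j be dropped, giving a shorter spanning family. *)
Lemma min_spanning_free m (e : 'I_m -> V) : spanning e ->
  (forall k (e' : 'I_k -> V), spanning e' -> (m <= k)%N) -> free_family e.
Proof.
move=> se mmin c c0 j; apply/eqP/negP => /negP cj0.
case: m e se mmin c c0 j cj0 => [|m] e se mmin c c0 j cj0; first by case: j cj0.
suff : spanning (fun k : 'I_m => e (lift j k)) by move=> /mmin; rewrite ltnn.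
move=> x; have [c' ->] := se x.
exists (fun k => c' (lift j k) - c' j / c j * c (lift j k)).
move: c0; rewrite (bigD1_ord j) //= (bigD1_ord j) //=.
set S0 := \sum_(i < m) c (lift j i) *: e (lift j i) => c0.
have ej : c j *: e j = - S0 by apply/eqP; rewrite -addr_eq0 c0.
have -> : c' j *: e j = (c' j / c j) *: (c j *: e j) by rewrite scalerA mulfVK.
rewrite ej scalerN.
under [X in _ = X]eq_bigr do rewrite scalerBl -scalerA.
by rewrite sumrB -scaler_sumr addrC.
Qed.

Lemma finite_dim_basis : finite_dim V ->
  exists m (e : 'I_m -> V), spanning e /\ free_family e.
Proof.
move=> [m0 [e0 se0]].
pose P m := `[< exists e : 'I_m -> V, spanning e >].
have exP : exists m, P m by exists m0; apply/asboolP; exists e0.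
case: (ex_minnP exP) => m /asboolP [e se] mmin.
exists m, e; split => //; apply: min_spanning_free se _ => k e' se'.
by apply: mmin; apply/asboolP; exists e'.
Qed.

Definition lincomb m (e : 'I_m -> V) (c : 'rV[R]_m) : V :=
  \sum_(i < m) c ord0 i *: e i.

Lemma lincomb_continuous m (e : 'I_m -> V) : continuous (lincomb e).
Proof.
suff sum_cont s : continuous (fun c : 'rV[R]_m => \sum_(i <- s) c ord0 i *: e i).
  exact: sum_cont.
elim: s => [|a s IHs] x /=.
  under eq_fun do rewrite big_nil; exact: cst_continuous.
under eq_fun do rewrite big_cons.
apply: (@continuousD _ _ _ (fun c : 'rV[R]_m => c ord0 a *: e a)); last exact: IHs.
exact/continuousZr_tmp/coord_continuous.
Qed.

Lemma lincombZ m (e : 'I_m -> V) k c : lincomb e (k *: c) = k *: lincomb e c.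
Proof.
by rewrite /lincomb scaler_sumr; apply: eq_bigr => i _; rewrite mxE scalerA.
Qed.

(* The minimum of the norm of [lincomb e] over the unit sphere, which is compact. *)
Lemma lincomb_norm_lower_bound m (e : 'I_m -> V) : free_family e ->
  exists2 k, 0 < k & forall c, k * `|c| <= `|lincomb e c|.
Proof.
move=> fe.
have inj0 c : lincomb e c = 0 -> c = 0.
  by move=> c0; apply/matrixP => i j; rewrite (ord1 i) mxE; exact: fe c0 j.
pose S := [set c : 'rV[R]_m | `|c| = 1].
have [[c1 Sc1]|S0] := pselect (S !=set0); last first.
  exists 1 => // c; suff -> : c = 0 by rewrite normr0 mulr0.
  apply/eqP/negP => /negP cn0; apply: S0; exists (`|c|^-1 *: c).
  by rewrite /S /= normrZ normfV normr_id mulVf // normr_eq0.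
have cS : compact S.
  apply: bounded_closed_compact.
    exists 1; split; first exact: num_real.
    by move=> y y1 c /= ->; rewrite ltW.
  have -> : S = Num.norm @^-1` [set x : R | x <= 1] `&`
                Num.norm @^-1` [set x : R | 1 <= x].
    apply/seteqP; split => [c /= ->|c /= [c_le1 c_ge1]]; first by rewrite lexx.
    by apply/eqP; rewrite eq_le c_le1 c_ge1.
  apply: closedI; apply: (continuous_closedP _).1; (exact: norm_continuous) ||
   (exact: closed_le) || exact: closed_ge.
have cL : {within S, continuous (fun c => `|lincomb e c|)}.
  apply: continuous_subspaceT => x.
  apply: (@continuous_comp _ _ _ (lincomb e) Num.norm).
    exact: lincomb_continuous.
  exact: norm_continuous.
have [c0 c0S c0min] := EVT_min_rV (ex_intro _ c1 Sc1) cS cL.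
exists `|lincomb e c0|.
  rewrite normr_gt0; apply/eqP => /inj0 c00; move: c0S.
  by rewrite inE /S /= c00 normr0 => /esym/eqP; rewrite oner_eq0.
move=> c; have [->|cn0] := eqVneq c 0; first by rewrite normr0 mulr0.
have := c0min (`|c|^-1 *: c).
rewrite inE /S /= normrZ normfV normr_id mulVf ?normr_eq0 // => /(_ erefl).
rewrite lincombZ normrZ normfV normr_id => c0_le.
have := ler_wpM2r (normr_ge0 c) c0_le.
by rewrite mulrAC mulVf ?mul1r // normr_eq0.
Qed.

Lemma finite_dim_bounded_closed_compact : finite_dim V -> forall A : set V,
  closed A -> (exists r, forall a, A a -> `|a| <= r) -> compact A.
Proof.
move=> hV A cA [r Ar].
have [m [e [se fe]]] := finite_dim_basis hV.
have [k k0 ke] := lincomb_norm_lower_bound fe.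
have -> : A = lincomb e @` (lincomb e @^-1` A).
  apply/seteqP; split => [x Ax|_ [c Ac <-] //].
  have [c cx] := se x; exists (\row_i c i);
    by rewrite /= /lincomb; under eq_bigr do rewrite mxE; rewrite -cx.
have Lcont := @lincomb_continuous m e.
apply: continuous_compact; first exact: continuous_subspaceT Lcont.
apply: bounded_closed_compact; last exact: (continuous_closedP _).1 Lcont _ cA.
exists (r / k); split; first exact: num_real.
move=> y ry c /= Ac; apply: ltW; apply: le_lt_trans ry.
by rewrite ler_pdivlMr // mulrC; apply: le_trans (ke c) (Ar _ Ac).
Qed.

End FiniteDimensional.

Lemma closed_ball_normE (R : realType) (V : normedModType R) (b : V) (s : R) :
  0 < s -> closed [set y | `|b - y| <= s].
Proof. by move=> s0; have := @closed_ball_closed _ _ b s; rewrite closed_ballE. Qed.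

Section ClosedChains.
Variables (R : realType) (V : normedModType R) (hV : finite_dim V).
Variables (C : set (set V)) (C0 : C !=set0) (Ctot : total_on C subset).
Hypothesis Ccl : forall X, C X -> closed X.

(* The traces of the members of C on shrinking balls around b form a filter
   base, and a cluster point in a compact ball lies in every member. *)
Lemma bigcap_closed_chain_near (b : V) (r : R) : 0 <= r ->
  (forall X, C X -> (dist_pt b X <= r%:E)%E) ->
  exists a, (\bigcap_(X in C) X) a /\ `|b - a| <= r.
Proof.
move=> r0 bC; have [X0 CX0] := C0.
pose D := [set i : set V * R | C i.1 /\ 0 < i.2].
pose B (i : set V * R) := [set y | i.1 y /\ `|b - y| <= r + i.2].
pose F := filter_from D B.
have FF : ProperFilter F.
  apply: filter_from_proper.
    apply: filter_from_filter; first by exists (X0, 1).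
    move=> [X e1] [Y e2] [/= CX e10] [/= CY e20].
    have [Z [CZ [ZX ZY]]] : exists Z, C Z /\ Z `<=` X /\ Z `<=` Y.
      by have [XY|YX] := Ctot CX CY; [exists X|exists Y]; do !split.
    exists (Z, Num.min e1 e2); first by split => //=; rewrite lt_min e10 e20.
    move=> y [/= Zy by_le]; split; split => /=; [exact: ZX| |exact: ZY|];
      by apply: le_trans by_le _; rewrite lerD2l ge_min lexx ?orbT.
  move=> [X e] [/= CX e0]; have [a [Xa ba]] := dist_pt_leP (bC X CX) e0.
  by exists a; split => //; exact: ltW.
pose K0 := [set y | `|b - y| <= r + 1].
have cK0 : compact K0.
  apply: finite_dim_bounded_closed_compact hV _ _ _.
    by apply: closed_ball_normE; rewrite ltr_wpDl.
  exists (`|b| + (r + 1)) => y by_le.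
  have -> : y = b - (b - y) by rewrite opprB addrC subrK.
  by apply: le_trans (ler_normB _ _) _; rewrite lerD2l.
have FK0 : F K0 by exists (X0, 1) => // y [].
have [p [_ clp]] := cK0 F FF FK0.
have pB X e : C X -> 0 < e -> B (X, e) p.
  move=> CX e0; have cB : closed (B (X, e)).
    by apply: closedI; [exact: Ccl|apply: closed_ball_normE; rewrite ltr_wpDl].
  rewrite ((closure_id _).1 cB); move: clp; rewrite clusterE; apply.
  exact: in_filter_from.
exists p; split; first by move=> X CX; have [] := pB X 1 CX ltr01.
by apply/ler_addgt0Pr => e e0; case: (pB X0 e CX0 e0).
Qed.

Lemma hausdorff_bigcap_closed_chain (A : set V) (r : R) : A !=set0 ->
  (forall X, C X -> (hausdorff X A <= r%:E)%E) ->
  (\bigcap_(X in C) X) !=set0 /\ (hausdorff (\bigcap_(X in C) X) A <= r%:E)%E.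
Proof.
move=> [a0 Aa0] CA; have [X0 CX0] := C0.
have r0 : 0 <= r.
  rewrite -lee_fin; apply: le_trans (CA X0 CX0).
  exact: le_trans (dist_pt_ge0 a0 X0) (dist_pt_le_hausdorffr X0 Aa0).
have near a : A a -> exists x, (\bigcap_(X in C) X) x /\ `|a - x| <= r.
  move=> Aa; apply: bigcap_closed_chain_near r0 _ => X CX.
  exact: le_trans (dist_pt_le_hausdorffr X Aa) (CA X CX).
split; first by have [x [Cx _]] := near a0 Aa0; exists x.
apply: hausdorff_le => [x Cx|a Aa].
  exact: le_trans (dist_pt_le_hausdorffl A (Cx X0 CX0)) (CA X0 CX0).
have [x [Cx ax]] := near a Aa.
by apply: le_trans (dist_pt_le_norm a Cx) _; rewrite lee_fin.
Qed.

End ClosedChains.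

Lemma lee_sum_fin_eq (R : realDomainType) (I : finType) (x y : I -> \bar R) :
  (forall i, x i \is a fin_num) -> (forall i, y i \is a fin_num) ->
  (forall i, (x i <= y i)%E) -> (\sum_i y i <= \sum_i x i)%E ->
  forall i, x i = y i.
Proof.
move=> xfin yfin xy yx i.
rewrite -(fineK (xfin i)) -(fineK (yfin i)); congr EFin.
have fxy j : xpredT j -> fine (x j) <= fine (y j) ?= iff (fine (x j) == fine (y j)).
  by move=> _; apply: leif_eq; rewrite -lee_fin !fineK.
have [_ sum_eq] := leif_sum fxy.
suff /forallP/(_ i)/implyP/(_ isT)/eqP :
    [forall (j | xpredT j), fine (x j) == fine (y j)] by [].
rewrite -sum_eq eq_le ler_sum => [|j _]; last exact: fxy.
rewrite -lee_fin -!sumEFin; under eq_bigr do rewrite fineK //.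
by under [X in (_ <= X)%E]eq_bigr do rewrite fineK //.
Qed.

Lemma ex_minimal_subset T (P : set (set T)) (K : set T) : P K ->
  (forall C, C !=set0 -> C `<=` P -> total_on C subset -> P (\bigcap_(X in C) X)) ->
  exists K', P K' /\ K' `<=` K /\ forall K'', P K'' -> K'' `<=` K' -> K'' = K'.
Proof.
move=> PK Pcap; pose Q X := P X /\ X `<=` K; pose S := {X : set T | Q X}.
pose supset (X Y : S) := `[< sval Y `<=` sval X >].
have [[K' [PK' K'K]] K'min] : exists t : S, forall s, supset t s -> s = t.
  apply: Zorn.
  - by move=> ?; apply/asboolP.
  - by move=> ? ? ? /asboolP XY /asboolP YZ; apply/asboolP; exact: subset_trans YZ XY.
  - by move=> [X ?] [Y ?] /asboolP /= YX /asboolP /= XY; apply/eq_exist/seteqP.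
  move=> F Ftot; have [[X0 FX0]|F0] := pselect (F !=set0); last first.
    by exists (exist Q K (conj PK (@subset_refl _ K))) => s Fs; case: F0; exists s.
  pose C := [set sval s | s in F].
  have PC : P (\bigcap_(X in C) X).
    apply: Pcap; first by exists (sval X0), X0.
      by move=> _ [s _ <-]; exact: (svalP s).1.
    move=> _ _ [s Fs <-] [u Fu <-].
    by have [/asboolP|/asboolP] := Ftot s u Fs Fu; [right|left].
  have CK : \bigcap_(X in C) X `<=` K.
    by move=> x Cx; apply: (svalP X0).2; apply: Cx; exists X0.
  exists (exist Q _ (conj PC CK)) => s Fs.
  by apply/asboolP => x /= Cx; apply: Cx; exists s.
exists K'; split => //; split => // K'' PK'' K''K'.
have := K'min (exist Q K'' (conj PK'' (subset_trans K''K' K'K))) (asboolT K''K').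
by move=> /(congr1 sval).
Qed.

Lemma fin_class_hausdorff_lty (R : realType) (V : normedModType R)
    (A0 X Y : set V) : fin_class A0 X -> fin_class A0 Y -> (hausdorff X Y < +oo)%E.
Proof.
move=> [_ [X0 XA]] [_ [Y0 YA]].
by apply: hausdorff_lty_trans X0 Y0 XA _; rewrite hausdorffC.
Qed.

Section Minimizers.
Variables (R : realType) (V : normedModType R) (A0 : set V).
Variables (n : nat) (M : 'I_n -> set V).
Hypothesis hM : forall i, fin_class A0 (M i).

Lemma Sigma_d_fin_num d K : Sigma_d A0 M d K -> forall i, d i \is a fin_num.
Proof.
move=> [[KA _] <-] i; have [_ [K0 _]] := KA.
exact/(hausdorff_fin_num K0)/fin_class_hausdorff_lty/hM.
Qed.

Lemma Sigma_d_bigcap_chain (hV : finite_dim V) (hn : (0 < n)%N) d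
    (C : set (set V)) : C !=set0 -> C `<=` Sigma_d A0 M d ->
  total_on C subset -> Sigma_d A0 M d (\bigcap_(X in C) X).
Proof.
move=> C0 CS Ctot; have [X0 CX0] := C0; set I := \bigcap_(X in C) X.
have [[X0A X0min] dX0] := CS X0 CX0.
have dfin := Sigma_d_fin_num (CS X0 CX0).
have dlty i : (d i < +oo)%E by move: (dfin i); rewrite fin_numE ltey => /andP[].
have Ccl X : C X -> closed X by move=> /CS [[[]]].
have IM i : I !=set0 /\ (hausdorff I (M i) <= d i)%E.
  rewrite -(fineK (dfin i)); apply: (hausdorff_bigcap_closed_chain hV C0 Ctot Ccl).
    by have [_ []] := hM i.
  by move=> X /CS [_ dX]; rewrite fineK // -dX.
have [I0 _] := IM (Ordinal hn).
have IA : fin_class A0 I.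
  split; first exact: closed_bigI.
  have [_ [Mi0 MA]] := hM (Ordinal hn).
  split => //; apply: (hausdorff_lty_trans I0 (hausdorff_lty_nonempty Mi0 MA)) MA.
  exact: le_lt_trans (IM (Ordinal hn)).2 (dlty _).
have SI : (S_M M I <= S_M M X0)%E.
  apply: lee_sum => i _; rewrite -[hausdorff X0 _]/(dvec M X0 i) dX0.
  exact: (IM i).2.
split; first by split => // Y YA; apply: le_trans SI (X0min Y YA).
apply/funext; apply: lee_sum_fin_eq => [i|//|i|].
- exact: hausdorff_fin_num I0 (le_lt_trans (IM i).2 (dlty i)).
- exact: (IM i).2.
- by rewrite -dX0; exact: X0min IA.
Qed.

End Minimizers.

Unset Implicit Arguments. Set Strict Implicit.

Theorem mainTheorem13 (R : realType) (V : normedModType R) (hV : finite_dim V)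
  (A0 : set V) (hA0c : closed A0) (hA0n : A0 !=set0)
  (n : nat) (hn : (0 < n)%N) (M : 'I_n -> set V)
  (hM : forall i, fin_class A0 (M i))
  (hSigma : Sigma A0 M !=set0)
  (d : 'I_n -> \bar R) (hd : Omega A0 M d)
  (K : set V) (hK : Sigma_d A0 M d K) :
  exists K' : set V, Sigma_d A0 M d K' /\ K' `<=` K /\
    (forall K'' : set V, Sigma_d A0 M d K'' -> K'' `<=` K' -> K'' = K').
Proof.
apply: ex_minimal_subset hK _ => C C0 CS Ctot.
exact: (Sigma_d_bigcap_chain hM hV hn C0 CS Ctot).
Qed.
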